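(* Let $\Omega=\mathbb{Z}_d^4$ or $\mathbb{R}^4$ be the ontic state space of an information system $S$ and a memory system $M$, with coordinates $(q_S,p_S,q_M,p_M)$. Let the initial epistemic state of $S$ be $(\langle \vec v_1\rangle,\vec v)$ with $\vec v_1=(v_1^1,v_1^2)^T$, $\vec v=(v^1,v^2)^T\in\mathbb{Z}_d^2$ or $\mathbb{R}^2$, and let the memory be initialized with known position $q_M=0$, so the initial joint state is $$\Big(\Big\langle (v_1^1,v_1^2,0,0)^T,(0,0,1,0)^T\Big\rangle,\ (v^1,v^2,0,0)^T\Big).$$ Let $$\Sigma=\begin{pmatrix}1&0&0&0\\0&1&0&-1\\1&0&1&0\\0&0&0&1\end{pmatrix}.$$ Then applying the transformation $\Sigma$ correlates the position of the memory with the position of the information system: in the final state, $q_M=q_S$ holds for every compatible ontic state. Moreover, if $d$ is prime or the systems are continuous, the marginal of the final state on $S$ (obtained by tracing out the memory) is the mixture of the post-measurement states of $S$ corresponding to all possible outcomes (those with nonzero probability) of a position measurement $\langle(1,0)^T\rangle$ on the initial state of $S$.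
   Context: Toy theory (quadrature formalism): ontic states $\vec m\in\Omega$; an observable $\vec f\in\Omega$ takes value $\vec f^T\vec m$. Poisson bracket $[\vec f,\vec g]=\sum_i(f_{2i-1}g_{2i}-f_{2i}g_{2i-1})$. A valid epistemic state $(V,\vec v)$ has $V$ a subspace/submodule that is isotropic ($[\vec f,\vec g]=0$ on $V$); its compatible ontic states are $V^\perp+\vec v$ (with $V^\perp=\{\vec m:\vec f^T\vec m=0\ \forall\vec f\in V\}$), uniformly distributed. A reversible transformation is a symplectic matrix $\Sigma$ (preserving the Poisson bracket), acting on ontic states by $\vec m\mapsto\Sigma\vec m$ and on epistemic states by $(V,\vec v)\mapsto((\Sigma^T)^{-1}V,\Sigma\vec v)$. Tracing out a subsystem means taking the marginal of the uniform distribution on compatible ontic states (projection onto the remaining coordinates). A measurement is an isotropic $V_\pi$; outcome $\vec v_\pi$ corresponds to the cell $V_\pi^\perp+\vec v_\pi$. Post-measurement state (update rule): after obtaining $\vec v_\pi$ on $(V,\vec v)$ the state is $(V_\pi+V_{\text{commute}},\vec v')$ with $V_{\text{commute}}=\{\vec f\in V:[\vec f,\vec g]=0\ \forall\vec g\in V_\pi\}$ and $\vec v'\in(V_\pi^\perp+\vec v_\pi)\cap(V_{\text{commute}}^\perp+\vec v)$. A mixture of epistemic states means the uniform distribution over the union of their compatible ontic sets. *)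

From HB Require Import structures.
From mathcomp Require Import all_boot all_order all_algebra.
From mathcomp Require Import boolp reals.
Set Implicit Arguments. Unset Strict Implicit. Unset Printing Implicit Defensive.
Import Order.TTheory GRing.Theory Num.Theory.
Local Open Scope ring_scope.

Section Toy.
Variable F : comUnitRingType.

(* ontic states / observables are column vectors in F^n *)
Definition subsp (n : nat) := 'cV[F]_n -> Prop.

Definition dot n (f m : 'cV[F]_n) : F := \sum_i f i 0 * m i 0.

Definition span n (s : seq 'cV[F]_n) : subsp n :=
  fun f => exists c : nat -> F, f = \sum_(i < size s) c i *: s`_i.

Definition addsp n (V W : subsp n) : subsp n :=
  fun f => exists a b, V a /\ W b /\ f = a + b.

Definition perp n (V : subsp n) : subsp n :=
  fun m => forall f, V f -> dot f m = 0.

Record estate n := EState { espace : subsp n; evec : 'cV[F]_n }.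

Definition compat n (s : estate n) : 'cV[F]_n -> Prop :=
  fun m => exists w, perp (espace s) w /\ m = w + evec s.

Definition transform n (S : 'M[F]_n) (s : estate n) : estate n :=
  EState (fun f => exists g, espace s g /\ f = invmx S^T *m g) (S *m evec s).

Definition pb2 (f g : 'cV[F]_2) : F :=
  f ord0 0 * g ord_max 0 - f ord_max 0 * g ord0 0.

Definition vcomm (V Vpi : subsp 2) : subsp 2 :=
  fun f => V f /\ forall g, Vpi g -> pb2 f g = 0.

(* outcome v_pi (cell V_pi^perp + v_pi) has nonzero probability on state s:
   the cell meets the set of compatible ontic states *)
Definition possible (s : estate 2) (Vpi : subsp 2) (vpi : 'cV[F]_2) : Prop :=
  exists m, compat s m /\ compat (EState Vpi vpi) m.

Definition valid_post (s : estate 2) (Vpi : subsp 2) (vpi v' : 'cV[F]_2) : Prop :=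
  compat (EState Vpi vpi) v' /\ compat (EState (vcomm (espace s) Vpi) (evec s)) v'.

Definition post (s : estate 2) (Vpi : subsp 2) (v' : 'cV[F]_2) : estate 2 :=
  EState (addsp Vpi (vcomm (espace s) Vpi)) v'.

(* support of the mixture of the post-measurement states over all possible
   outcomes: union of their compatible ontic sets *)
Definition mix_post (s : estate 2) (Vpi : subsp 2) : 'cV[F]_2 -> Prop :=
  fun m => exists vpi v', possible s Vpi vpi /\ valid_post s Vpi vpi v' /\
                          compat (post s Vpi v') m.

Definition projS (m : 'cV[F]_4) : 'cV[F]_2 :=
  \col_(i < 2) m (widen_ord (isT : (2 <= 4)%N) i) 0.

(* set-level marginal: image of the compatible set under projS *)
Definition trace_support (s : estate 4) : 'cV[F]_2 -> Prop :=
  fun x => exists m, compat s m /\ x = projS m.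

Definition col2 (a b : F) : 'cV[F]_2 := \col_(i < 2) nth 0 [:: a; b] i.
Definition col4 (a b c e : F) : 'cV[F]_4 := \col_(i < 4) nth 0 [:: a; b; c; e] i.

Definition qS : 'I_4 := @Ordinal 4 0 isT.
Definition qM : 'I_4 := @Ordinal 4 2 isT.

Definition sigma_entry (i j : nat) : F :=
  match i, j with
  | 0, 0 => 1 | 1, 1 => 1 | 1, 3 => -1 | 2, 0 => 1 | 2, 2 => 1 | 3, 3 => 1
  | _, _ => 0 end.
Definition Sigma : 'M[F]_4 := \matrix_(i, j) sigma_entry i j.

Definition S_init (a b x y : F) : estate 2 := EState (span [:: col2 a b]) (col2 x y).

Definition joint_init (a b x y : F) : estate 4 :=
  EState (span [:: col4 a b 0 0; col4 0 0 1 0]) (col4 x y 0 0).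

Definition Vpos : subsp 2 := span [:: col2 1 0].

End Toy.

Definition finset_of (T : finType) (P : T -> Prop) : {set T} := [set x | `[< P x >]].
Definition unif (T : finType) (A : {set T}) : T -> rat :=
  fun x => if x \in A then (#|A|%:R)^-1 else 0.
Definition marg (T U : finType) (f : T -> U) (P : T -> rat) : U -> rat :=
  fun y => \sum_(x | f x == y) P x.

From Pilot Require Import Defs.
(* Sigma is invertible, so the final compatible set is the image under Sigma of the
   initial one: it is cut out by q_M = q_S and a (q_S - x) + b (p_S + p_M - y) = 0.
   Since p_S + p_M is unconstrained after projecting onto S, the marginal support consists
   of the (q, p) whose position q is that of some ontic state compatible with
   (<(a, b)>, (x, y)).  For the position measurement, V_commute lies inside
   V_pi = <(1, 0)>, so each post-measurement state is a vertical line q = const, and the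
   mixture over the possible outcomes is that same set.  Over a finite ring every nonempty
   fibre of the projection is a translate, in the p_M coordinate, of the annihilator of b;
   hence the uniform distribution projects onto the uniform one. *)
From HB Require Import structures.
From mathcomp Require Import all_boot all_order all_algebra.
From mathcomp Require Import boolp reals ring.
(* Re-imported so that [span] denotes [Defs.span], not [vector.span]. *)
Import Defs.
Import GRing.Theory Num.Theory.
Set Implicit Arguments. Unset Strict Implicit. Unset Printing Implicit Defensive.
Local Open Scope ring_scope.

Section EpistemicStates.
Variable F : comUnitRingType.
Implicit Types n : nat.

Lemma dotE n (f m : 'cV[F]_n) : dot f m = (f^T *m m) 0 0.
Proof. by rewrite mxE; apply: eq_bigr => i _; rewrite mxE. Qed.

Lemma dot_mulmxl n (A : 'M[F]_n) f m : dot (A *m f) m = dot f (A^T *m m).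
Proof. by rewrite !dotE trmx_mul mulmxA. Qed.

Lemma dot0r n (f : 'cV[F]_n) : dot f 0 = 0.
Proof. by rewrite dotE mulmx0 mxE. Qed.

Lemma dot_sumZl n k (c : nat -> F) (s : seq 'cV[F]_n) m :
  dot (\sum_(i < k) c i *: s`_i) m = \sum_(i < k) c i * dot s`_i m.
Proof.
rewrite /dot; under eq_bigr do rewrite summxE big_distrl.
rewrite exchange_big; apply: eq_bigr => i _; rewrite big_distrr.
by apply: eq_bigr => j _; rewrite mxE /= mulrA.
Qed.

Lemma span_mem n (s : seq 'cV[F]_n) f : f \in s -> span s f.
Proof.
move=> sf; exists (fun i => (i == index f s)%:R).
rewrite (bigD1 (Ordinal (etrans (index_mem f s) sf))) //= eqxx scale1r nth_index //.
rewrite big1 ?addr0 //.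
by move=> i /negbTE ne_i; rewrite -val_eqE /= in ne_i; rewrite ne_i scale0r.
Qed.

Lemma span0 n (s : seq 'cV[F]_n) : span s 0.
Proof. by exists (fun=> 0); rewrite big1 // => i _; rewrite scale0r. Qed.

Lemma perp_spanP n (s : seq 'cV[F]_n) w :
  perp (span s) w <-> {in s, forall f, dot f w = 0}.
Proof.
split=> [perp_w f /span_mem | orth_s f [c ->]]; first exact: perp_w.
by rewrite dot_sumZl big1 // => i _; rewrite orth_s ?mulr0 ?mem_nth.
Qed.

Lemma compatE n (s : estate F n) m : compat s m <-> perp (espace s) (m - evec s).
Proof.
split=> [[w [perp_w ->]] | perp_m]; first by rewrite addrK.
by exists (m - evec s); rewrite subrK.
Qed.

Lemma compat_evec n (s : estate F n) : compat s (evec s).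
Proof. by apply/compatE; rewrite subrr => f _; apply: dot0r. Qed.

Lemma compat_subsp n (V W : subsp F n) v m :
  (forall f, V f -> W f) -> compat (EState W v) m -> compat (EState V v) m.
Proof. by move=> sVW /compatE perp_m; apply/compatE => f /sVW; apply: perp_m. Qed.

Lemma compat_transform n (S : 'M[F]_n) (s : estate F n) m : S \in unitmx ->
  compat (transform S s) m <-> compat s (invmx S *m m).
Proof.
move=> uS; rewrite !compatE /=.
have -> : invmx S *m m - evec s = (invmx S^T)^T *m (m - S *m evec s).
  by rewrite -trmx_inv trmxK mulmxBr mulKmx.
split=> [perp_m f Vf | perp_m _ [g [Vg ->]]]; last by rewrite dot_mulmxl perp_m.
by rewrite -dot_mulmxl; apply: perp_m; exists f.
Qed.

End EpistemicStates.

Section PositionMeasurement.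
Variable F : comUnitRingType.

Lemma sum_ord2 (G : 'I_2 -> F) : \sum_i G i = G ord0 + G ord_max.
Proof. by rewrite big_ord_recl big_ord1; congr (_ + G _); apply: val_inj. Qed.

Lemma cV2P (u v : 'cV[F]_2) :
  u ord0 0 = v ord0 0 -> u ord_max 0 = v ord_max 0 -> u = v.
Proof.
move=> eq0 eq1; apply/colP => -[[|[|//]] i2].
- by rewrite (_ : Ordinal i2 = ord0) //; apply: val_inj.
- by rewrite (_ : Ordinal i2 = ord_max) //; apply: val_inj.
Qed.

Lemma dot_col2 a b (m : 'cV[F]_2) : dot (col2 a b) m = a * m ord0 0 + b * m ord_max 0.
Proof. by rewrite /dot sum_ord2 !mxE. Qed.

Lemma Vpos_col2 : @Vpos F (col2 1 0).
Proof. by apply: span_mem; rewrite mem_head. Qed.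

Lemma compat_Vpos v m : compat (EState (@Vpos F) v) m <-> m ord0 0 = v ord0 0.
Proof.
rewrite compatE perp_spanP; split=> [orth | eq_m f].
  apply/eqP; rewrite -subr_eq0 -(orth _ (mem_head _ _)) dot_col2 !mxE /=.
  by rewrite mul1r mul0r addr0.
by rewrite inE => /eqP ->; rewrite dot_col2 !mxE eq_m; ring.
Qed.

Lemma Vpos_coord (f : 'cV[F]_2) : @Vpos F f <-> f ord_max 0 = 0.
Proof.
split=> [[c ->] | f1]; first by rewrite big_ord1 !mxE /= mulr0.
exists (fun=> f ord0 0); rewrite big_ord1.
by apply: cV2P; rewrite !mxE /= ?mulr1 ?mulr0.
Qed.

Lemma addsp_Vpos_vcomm (V : subsp F 2) :
  V 0 -> addsp (@Vpos F) (vcomm V (@Vpos F)) = @Vpos F.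
Proof.
move=> V0; apply/funext => f; apply/propext; split.
- move=> [g [h [/Vpos_coord g1 [[_ /(_ _ Vpos_col2)] h1 ->]]]]; apply/Vpos_coord.
  move: h1; rewrite /pb2 !mxE /= g1 add0r mulr0 mulr1 sub0r.
  by move=> /eqP; rewrite oppr_eq0 => /eqP.
- move=> Vf; exists f, 0; split=> //; split; last by rewrite addr0.
  by split=> // g _; rewrite /pb2 !mxE !mul0r subrr.
Qed.

Lemma mix_post_Vpos (s : estate F 2) z : espace s 0 ->
  mix_post s (@Vpos F) z <-> exists m, compat s m /\ m ord0 0 = z ord0 0.
Proof.
move=> s0; rewrite /mix_post /post addsp_Vpos_vcomm //; split.
- move=> [vpi [v' [[m [sm /compat_Vpos m0]] [[/compat_Vpos v'0 _] /compat_Vpos z0]]]].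
  by exists m; rewrite z0 v'0.
- move=> [m [sm m0]]; exists m, m; split; first by exists m; split; last exact: compat_evec.
  split; last exact/compat_Vpos.
  by split; [exact: (compat_evec (EState _ m)) | apply: compat_subsp sm => f []].
Qed.

End PositionMeasurement.

Section MemoryCoupling.
Variable F : comUnitRingType.

Definition pS : 'I_4 := @Ordinal 4 1 isT.
Definition pM : 'I_4 := @Ordinal 4 3 isT.

Lemma sum_ord4 (G : 'I_4 -> F) : \sum_i G i = G qS + G pS + G qM + G pM.
Proof.
rewrite !big_ord_recl big_ord0 addr0 !addrA.
by congr (G _ + G _ + G _ + G _); apply: val_inj.
Qed.

Lemma cV4P (u v : 'cV[F]_4) : u qS 0 = v qS 0 -> u pS 0 = v pS 0 ->
  u qM 0 = v qM 0 -> u pM 0 = v pM 0 -> u = v.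
Proof.
move=> eq0 eq1 eq2 eq3; apply/colP => -[[|[|[|[|//]]]] i4].
- by rewrite (_ : Ordinal i4 = qS) //; apply: val_inj.
- by rewrite (_ : Ordinal i4 = pS) //; apply: val_inj.
- by rewrite (_ : Ordinal i4 = qM) //; apply: val_inj.
- by rewrite (_ : Ordinal i4 = pM) //; apply: val_inj.
Qed.

Lemma dot_col4 a b c e (m : 'cV[F]_4) :
  dot (col4 a b c e) m = a * m qS 0 + b * m pS 0 + c * m qM 0 + e * m pM 0.
Proof. by rewrite /dot sum_ord4 !mxE. Qed.

Lemma projS_qS (m : 'cV[F]_4) : projS m ord0 0 = m qS 0.
Proof. by rewrite mxE; congr (m _ 0); apply: val_inj. Qed.

Lemma projS_pS (m : 'cV[F]_4) : projS m ord_max 0 = m pS 0.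
Proof. by rewrite mxE; congr (m _ 0); apply: val_inj. Qed.

Definition sigma_inv_entry (i j : nat) : F :=
  match i, j with
  | 0, 0 => 1 | 1, 1 => 1 | 1, 3 => 1 | 2, 0 => -1 | 2, 2 => 1 | 3, 3 => 1
  | _, _ => 0 end.
Definition Sigma_inv : 'M[F]_4 := \matrix_(i, j) sigma_inv_entry i j.

Lemma mulmx_Sigma_inv : Sigma F *m Sigma_inv = 1%:M.
Proof.
apply/matrixP => i j; rewrite !mxE sum_ord4 !mxE.
by case: i => [[|[|[|[|//]]]] ?]; case: j => [[|[|[|[|//]]]] ?]; rewrite /= ?mxE /=; ring.
Qed.

Lemma Sigma_unit : Sigma F \in unitmx.
Proof. by have [] := mulmx1_unit mulmx_Sigma_inv. Qed.

Lemma invmx_Sigma : invmx (Sigma F) = Sigma_inv.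
Proof. by rewrite -[RHS](mulKmx Sigma_unit) mulmx_Sigma_inv mulmx1. Qed.

Lemma mulmx_Sigma_inv_col (m : 'cV[F]_4) :
  Sigma_inv *m m = col4 (m qS 0) (m pS 0 + m pM 0) (m qM 0 - m qS 0) (m pM 0).
Proof. by apply: cV4P; rewrite !mxE sum_ord4 !mxE /=; ring. Qed.

Lemma compat_joint_init a b x y (w : 'cV[F]_4) :
  compat (joint_init a b x y) w <->
  a * (w qS 0 - x) + b * (w pS 0 - y) = 0 /\ w qM 0 = 0.
Proof.
rewrite compatE perp_spanP; split=> [orth | [eq_ab eq_qM] f].
- have := orth _ (mem_head _ _); have := orth (col4 0 0 1 0); rewrite !inE eqxx orbT.
  rewrite !dot_col4 !mxE /= => /(_ isT) eq_qM eq_ab.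
  by split; [rewrite -[RHS]eq_ab | rewrite -[RHS]eq_qM]; ring.
- rewrite !inE => /orP[] /eqP ->; rewrite dot_col4 !mxE /=.
    by rewrite -[RHS]eq_ab; ring.
  by rewrite eq_qM; ring.
Qed.

Lemma compat_final a b x y (m : 'cV[F]_4) :
  compat (transform (Sigma F) (joint_init a b x y)) m <->
  m qM 0 = m qS 0 /\ a * (m qS 0 - x) + b * (m pS 0 + m pM 0 - y) = 0.
Proof.
rewrite compat_transform ?Sigma_unit // invmx_Sigma mulmx_Sigma_inv_col.
rewrite compat_joint_init !mxE /=.
by split=> [[? /subr0_eq] | [-> ?]] //; rewrite subrr.
Qed.

Lemma compat_S_init a b x y (w : 'cV[F]_2) :
  compat (S_init a b x y) w <-> a * (w ord0 0 - x) + b * (w ord_max 0 - y) = 0.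
Proof.
rewrite compatE perp_spanP; split=> [orth | eq_ab f].
  by rewrite -[RHS](orth _ (mem_head _ _)) dot_col2 !mxE.
by rewrite inE => /eqP ->; rewrite dot_col2 !mxE.
Qed.

Lemma trace_support_final a b x y z :
  trace_support (transform (Sigma F) (joint_init a b x y)) z <->
  exists w, compat (S_init a b x y) w /\ w ord0 0 = z ord0 0.
Proof.
split=> [[m [/compat_final [_ eq_m] ->]] | [w [/compat_S_init eq_w w0]]].
  exists (col2 (m qS 0) (m pS 0 + m pM 0)); rewrite projS_qS !mxE.
  by split=> //; apply/compat_S_init; rewrite !mxE.
exists (col4 (z ord0 0) (z ord_max 0) (z ord0 0) (w ord_max 0 - z ord_max 0)); split.
  by apply/compat_final; rewrite !mxE /=; split=> //; rewrite -w0 -[RHS]eq_w; ring.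
by apply: cV2P; rewrite ?projS_qS ?projS_pS !mxE.
Qed.

Lemma trace_support_final_mix_post a b x y z :
  trace_support (transform (Sigma F) (joint_init a b x y)) z <->
  mix_post (S_init a b x y) (@Vpos F) z.
Proof.
have init0 : espace (S_init a b x y) 0 by apply: span0.
exact: iff_trans (trace_support_final a b x y z) (iff_sym (mix_post_Vpos z init0)).
Qed.

End MemoryCoupling.

Lemma marg_unif_const_fibres (T U : finType) (f : T -> U) (A : {set T}) k :
  (forall t, t \in A -> #|[set t' in A | f t' == f t]| = k) ->
  marg f (unif A) =1 unif (f @: A).
Proof.
move=> fibre_k.
have cardA : #|A| = (#|f @: A| * k)%N.
  rewrite -sum1_card (partition_big f (mem (f @: A))) => [|t tA]; last exact: imset_f.
  rewrite -sum_nat_const; apply: eq_bigr => _ /imsetP[t tA ->].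
  by rewrite -(fibre_k t tA) -sum1_card; apply: eq_bigl => t'; rewrite inE.
move=> u; rewrite /marg /unif -big_mkcondr /=.
case: ifPn => [/imsetP[t tA ->] | fAu]; last first.
  by rewrite big1 // => t /andP[/eqP ft tA]; case/negP: fAu; rewrite -ft imset_f.
have k_gt0 : (0 < k)%N.
  by rewrite -(fibre_k t tA); apply/card_gt0P; exists t; rewrite !inE tA eqxx.
rewrite (eq_bigl (mem [set t' in A | f t' == f t])) => [|t']; last by rewrite !inE andbC.
rewrite sumr_const fibre_k // cardA -[_ *+ k]mulr_natr natrM invfM -mulrA.
by rewrite mulVf ?mulr1 // pnatr_eq0 -lt0n.
Qed.

Section FiniteRing.
Variable F : finComUnitRingType.
Variables a b x y : F.
Let final := transform (Sigma F) (joint_init a b x y).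

Lemma finset_of_mix_post :
  finset_of (mix_post (S_init a b x y) (@Vpos F)) = @projS F @: finset_of (compat final).
Proof.
apply/setP => z; rewrite inE; apply/asboolP/imsetP.
  by move=> /trace_support_final_mix_post [m [fm ->]]; exists m; rewrite // inE; apply/asboolP.
move=> [m + ->]; rewrite inE => /asboolP fm.
by apply/trace_support_final_mix_post; exists m.
Qed.

Lemma card_fibre_final m0 : compat final m0 ->
  #|[set m in finset_of (compat final) | projS m == projS m0]| = #|[set t : F | b * t == 0]|.
Proof.
move=> /compat_final [qM0 eq0].
pose shift t := m0 + col4 0 0 0 t.
have shift_inj : injective shift.
  by move=> t1 t2 /addrI /(congr1 (fun m : 'cV[F]_4 => m pM 0)); rewrite !mxE.
transitivity #|shift @: [set t : F | b * t == 0]|; last exact: card_imset.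
apply: eq_card => m; rewrite !inE.
apply/andP/imsetP => [[/asboolP /compat_final [qM1 eq1] /eqP eq_proj] | [t]].
  have [eq_qS eq_pS] : m qS 0 = m0 qS 0 /\ m pS 0 = m0 pS 0.
    by rewrite -!projS_qS -!projS_pS eq_proj.
  exists (m pM 0 - m0 pM 0).
    rewrite inE; apply/eqP.
    by have := congr2 (fun u v => u - v) eq1 eq0; rewrite subrr eq_qS eq_pS => <-; ring.
  by apply: cV4P; rewrite !mxE /= ?qM1 ?qM0 ?eq_qS ?eq_pS; ring.
rewrite inE => /eqP bt ->; split.
  apply/asboolP/compat_final; rewrite !mxE /= qM0; split=> //.
  transitivity (a * (m0 qS 0 - x) + b * (m0 pS 0 + m0 pM 0 - y) + b * t); first ring.
  by rewrite eq0 bt addr0.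
by apply/eqP; apply: cV2P; rewrite ?projS_qS ?projS_pS !mxE /= !addr0.
Qed.

Lemma marg_final : marg (@projS F) (unif (finset_of (compat final))) =1
  unif (finset_of (mix_post (S_init a b x y) (@Vpos F))).
Proof.
rewrite finset_of_mix_post.
apply: (marg_unif_const_fibres (k := #|[set t : F | b * t == 0]|)).
by move=> m; rewrite inE => /asboolP /card_fibre_final.
Qed.

End FiniteRing.

Theorem theorem4 :
  (* discrete case: Omega = Z_d^4 *)
  (forall (d : nat), (1 < d)%N -> forall a b x y : 'Z_d,
     let fin := transform (@Sigma _) (joint_init a b x y) in
     (forall m, compat fin m -> m qM 0 = m qS 0) /\
     (prime d ->
        marg (@projS _) (unif (finset_of (compat fin)))
        =1 unif (finset_of (mix_post (S_init a b x y) (@Vpos _)))))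
  /\
  (* continuous case: Omega = R^4 *)
  (forall (R : realType) (a b x y : R),
     let fin := transform (@Sigma _) (joint_init a b x y) in
     (forall m, compat fin m -> m qM 0 = m qS 0) /\
     (forall z, trace_support fin z <-> mix_post (S_init a b x y) (@Vpos _) z)).
Proof.
split=> [d _ a b x y fin | R a b x y fin].
  by split=> [m /compat_final [] // | _]; apply: marg_final.
by split=> [m /compat_final [] // | z]; apply: trace_support_final_mix_post.
Qed.
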